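(* Let $\{(y_t,x_t,f_t)\}_{t=1}^T$ be data with $y_t\in\mathbb R$, $x_t=(x_{1,t},\dots,x_{d_x,t})'\in\mathbb R^{d_x}$, $f_t\in\mathbb R^{d_f}$. Let $\mathcal A\subset\mathbb R^{2d_x}$ be compact and let $\Gamma\subset\mathbb R^{d_f}$ be compact. Let $L_j\le U_j$, $j=1,\dots,d_x$, be constants such that every $(\beta',\delta')'\in\mathcal A$ satisfies $L_j\le\delta_j\le U_j$ for all $j$. Let $M_t=\max_{\gamma\in\Gamma}|f_t'\gamma|$, fix $\epsilon>0$ and $0<\tau_1<\tau_2<1$. Original problem: minimize $$\mathbb S_T(\alpha,\gamma)=\frac1T\sum_{t=1}^T\big(y_t-x_t'\beta-x_t'\delta\,1\{f_t'\gamma>0\}\big)^2,\qquad \alpha=(\beta',\delta')',$$ over $(\alpha,\gamma)\in\mathcal A\times\Gamma$ subject to $\tau_1\le T^{-1}\sum_{t=1}^T1\{f_t'\gamma>0\}\le\tau_2$; let $(\hat\alpha,\hat\gamma)$ be a minimizer. MIQP problem: with decision variables $\beta,\delta\in\mathbb R^{d_x}$, $\gamma\in\mathbb R^{d_f}$, $d=(d_1,\dots,d_T)$ and real $\ell_{j,t}$ ($j\le d_x$, $t\le T$), minimize $$\mathbb Q_T(\beta,\ell)=\frac1T\sum_{t=1}^T\Big(y_t-x_t'\beta-\sum_{j=1}^{d_x}x_{j,t}\ell_{j,t}\Big)^2$$ subject to, for all $t$ and $j$: $(\beta,\delta)\in\mathcal A$, $\gamma\in\Gamma$, $d_t\in\{0,1\}$,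 $L_j\le\delta_j\le U_j$, $(d_t-1)(M_t+\epsilon)<f_t'\gamma\le d_tM_t$, $d_tL_j\le\ell_{j,t}\le d_tU_j$, $L_j(1-d_t)\le\delta_j-\ell_{j,t}\le U_j(1-d_t)$, and $\tau_1\le T^{-1}\sum_t d_t\le\tau_2$. Let $(\bar\beta,\bar\delta,\bar\gamma,\bar d,\bar\ell)$ be a minimizer and $\bar\alpha=(\bar\beta',\bar\delta')'$. Then $\mathbb S_T(\hat\alpha,\hat\gamma)=\mathbb S_T(\bar\alpha,\bar\gamma)$ (and this common value equals $\mathbb Q_T(\bar\beta,\bar\ell)$).
   Context: This is the mixed integer quadratic programming (MIQP) reformulation of the least-squares estimator of the two-regime regression $y_t=x_t'\beta_0+x_t'\delta_0 1\{f_t'\gamma_0>0\}+\varepsilon_t$. Both minimizers are assumed to exist. *)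

From Stdlib Require Import Reals.
From mathcomp Require Import all_boot.
Set Implicit Arguments. Unset Strict Implicit.

Local Open Scope R_scope.

Definition vsum (n : nat) (F : 'I_n -> R) : R := \big[Rplus/0]_(i < n) F i.
Definition dot (n : nat) (u v : 'I_n -> R) : R := vsum (fun i => u i * v i).

Definition ind_pos (z : R) : R := if Rlt_dec 0 z then 1 else 0.

(* compactness of a subset of R^n (sequential compactness, coordinatewise =
   Euclidean convergence in finite dimension) *)
Definition compact_set (n : nat) (K : ('I_n -> R) -> Prop) : Prop :=
  forall u : nat -> ('I_n -> R), (forall k, K (u k)) ->
    exists phi : nat -> nat, (forall k, (phi k < phi (Datatypes.S k))%nat) /\
      exists v, K v /\ forall i, Un_cv (fun k => u (phi k) i) (v i).

(* alpha = (beta', delta')' in R^{2 dx} *)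
Definition beta_of (dx : nat) (a : 'I_(dx + dx) -> R) : 'I_dx -> R :=
  fun j => a (lshift dx j).
Definition delta_of (dx : nat) (a : 'I_(dx + dx) -> R) : 'I_dx -> R :=
  fun j => a (rshift dx j).
Definition stack (dx : nat) (b dl : 'I_dx -> R) : 'I_(dx + dx) -> R :=
  fun i => match split i with inl j => b j | inr j => dl j end.

Definition ST (T dx df : nat) (y : 'I_T -> R) (x : 'I_T -> 'I_dx -> R)
  (f : 'I_T -> 'I_df -> R) (a : 'I_(dx + dx) -> R) (g : 'I_df -> R) : R :=
  / INR T * vsum (fun t => (y t - dot (x t) (beta_of a)
                   - dot (x t) (delta_of a) * ind_pos (dot (f t) g)) ^ 2).

Definition QT (T dx : nat) (y : 'I_T -> R) (x : 'I_T -> 'I_dx -> R)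
  (b : 'I_dx -> R) (l : 'I_dx -> 'I_T -> R) : R :=
  / INR T * vsum (fun t => (y t - dot (x t) b
                   - vsum (fun j => x t j * l j t)) ^ 2).

Definition orig_feasible (T dx df : nat) (f : 'I_T -> 'I_df -> R)
  (A : ('I_(dx + dx) -> R) -> Prop) (G : ('I_df -> R) -> Prop)
  (tau1 tau2 : R) (a : 'I_(dx + dx) -> R) (g : 'I_df -> R) : Prop :=
  A a /\ G g /\
  tau1 <= / INR T * vsum (fun t => ind_pos (dot (f t) g)) <= tau2.

Definition miqp_feasible (T dx df : nat) (f : 'I_T -> 'I_df -> R)
  (A : ('I_(dx + dx) -> R) -> Prop) (G : ('I_df -> R) -> Prop)
  (L U : 'I_dx -> R) (M : 'I_T -> R) (eps tau1 tau2 : R)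
  (b dl : 'I_dx -> R) (g : 'I_df -> R) (d : 'I_T -> R)
  (l : 'I_dx -> 'I_T -> R) : Prop :=
  A (stack b dl) /\ G g /\
  (forall t, d t = 0 \/ d t = 1) /\
  (forall j, L j <= dl j <= U j) /\
  (forall t, (d t - 1) * (M t + eps) < dot (f t) g <= d t * M t) /\
  (forall j t, d t * L j <= l j t <= d t * U j) /\
  (forall j t, L j * (1 - d t) <= dl j - l j t <= U j * (1 - d t)) /\
  tau1 <= / INR T * vsum d <= tau2.

From Stdlib Require Import Reals Lra FunctionalExtensionality.
From mathcomp Require Import all_boot.
Local Open Scope R_scope.

(* The MIQP is an exact reformulation of the threshold least-squares problem.
   Two pointwise facts drive it, for a binary d_t:
   - the big-M constraint (d_t - 1)(M_t + eps) < f_t'g <= d_t M_t forces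
     d_t = 1{f_t'g > 0};
   - the constraints on l_{j,t} force l_{j,t} = d_t delta_j.
   Hence on the MIQP feasible set d is the indicator vector and
   Q_T(b, l) = S_T((b, dl), g).  Conversely every feasible point (a, g) of the
   original problem lifts to a MIQP feasible point (d = 1{f'g > 0},
   l = d delta) with the same objective value, and every MIQP feasible point
   projects to an original feasible point.  So both problems have the same
   optimal value, which gives the two equalities of the theorem.  Compactness,
   attainment of M_t and the bounds on tau only serve to guarantee that the
   minimizers exist; since they are assumed given, the proof does not use them. *)

Lemma beta_stack dx (b dl : 'I_dx -> R) : beta_of (stack b dl) = b.
Proof.
apply: functional_extensionality => j.
by rewrite /beta_of /stack (unsplitK (inl j)).
Qed.

Lemma delta_stack dx (b dl : 'I_dx -> R) : delta_of (stack b dl) = dl.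
Proof.
apply: functional_extensionality => j.
by rewrite /delta_of /stack (unsplitK (inr j)).
Qed.

Lemma stack_of dx (a : 'I_(dx + dx) -> R) : stack (beta_of a) (delta_of a) = a.
Proof.
apply: functional_extensionality => i; rewrite /stack /beta_of /delta_of.
by case E: (split i) => [j|j]; rewrite -[in RHS](splitK i) E.
Qed.

Lemma vsum_ext {n} {F G : 'I_n -> R} : (forall i, F i = G i) -> vsum F = vsum G.
Proof. by move=> FG; rewrite /vsum; apply: eq_bigr => i _. Qed.

Lemma vsum_mulr n (F : 'I_n -> R) c : vsum F * c = vsum (fun i => F i * c).
Proof. by rewrite /vsum; elim/big_rec2: _ => [|i s1 s2 _ <-]; lra. Qed.

Lemma binary_indicator {d z m e : R} :
  d = 0 \/ d = 1 -> (d - 1) * (m + e) < z <= d * m -> d = ind_pos z.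
Proof.
rewrite /ind_pos => Hd Hz.
by case: Rlt_dec => Hpos; case: Hd Hz => -> Hz //; exfalso; lra.
Qed.

Lemma indicator_bigM {z m e : R} :
  0 < e -> Rabs z <= m -> (ind_pos z - 1) * (m + e) < z <= ind_pos z * m.
Proof.
rewrite /ind_pos => He Hz.
have := Rle_abs z; have := Rle_abs (- z); rewrite Rabs_Ropp.
by case: Rlt_dec => Hpos /= ? ?; lra.
Qed.

Lemma product_linearization {d l dl lo up : R} :
  d = 0 \/ d = 1 -> d * lo <= l <= d * up ->
  lo * (1 - d) <= dl - l <= up * (1 - d) -> l = d * dl.
Proof. by case=> -> ? ?; lra. Qed.

Lemma product_linearization_feasible {d dl lo up : R} :
  d = 0 \/ d = 1 -> lo <= dl <= up ->
  d * lo <= d * dl <= d * up /\ lo * (1 - d) <= dl - d * dl <= up * (1 - d).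
Proof. by case=> -> ?; lra. Qed.

Lemma QT_linearized T dx df (y : 'I_T -> R) (x : 'I_T -> 'I_dx -> R)
    (f : 'I_T -> 'I_df -> R) (b dl : 'I_dx -> R) (g : 'I_df -> R) :
  QT y x b (fun j t => ind_pos (dot (f t) g) * dl j) = ST y x f (stack b dl) g.
Proof.
rewrite /QT /ST beta_stack delta_stack; congr (_ * _); apply: vsum_ext => t.
rewrite /dot vsum_mulr; congr (_ ^ 2); congr (_ - _); apply: vsum_ext => j.
by rewrite Rmult_assoc (Rmult_comm _ (dl j)) -Rmult_assoc.
Qed.

Section Reformulation.

Context {T dx df : nat} {f : 'I_T -> 'I_df -> R}.
Context {A : ('I_(dx + dx) -> R) -> Prop} {G : ('I_df -> R) -> Prop}.
Context {L U : 'I_dx -> R} {M : 'I_T -> R} {eps tau1 tau2 : R}.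

Let miqp := miqp_feasible f A G L U M eps tau1 tau2.
Let orig := orig_feasible f A G tau1 tau2.

Lemma miqp_indicator {b dl g d l} :
  miqp b dl g d l -> forall t, d t = ind_pos (dot (f t) g).
Proof.
move=> [_ [_ [Hd [_ [HM _]]]]] t.
exact: binary_indicator (Hd t) (HM t).
Qed.

Lemma miqp_objective y x {b dl g d l} :
  miqp b dl g d l -> QT y x b l = ST y x f (stack b dl) g.
Proof.
move=> Hf; have Hind := miqp_indicator Hf.
case: Hf => [_ [_ [Hd [_ [_ [Hl1 Hl2]]]]]].
rewrite -QT_linearized; congr (QT _ _ _ _).
apply: functional_extensionality => j; apply: functional_extensionality => t.
rewrite -Hind; exact: product_linearization (Hd t) (Hl1 j t) (proj1 Hl2 j t).
Qed.

Lemma miqp_to_orig {b dl g d l} : miqp b dl g d l -> orig (stack b dl) g.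
Proof.
move=> Hf; have Hind := miqp_indicator Hf.
case: Hf => [HA [HG [_ [_ [_ [_ [_ Htau]]]]]]].
by split=> //; split=> //; rewrite -(vsum_ext Hind).
Qed.

Hypothesis HAbd : forall a, A a -> forall j, L j <= delta_of a j <= U j.
Hypothesis HMub : forall t g, G g -> Rabs (dot (f t) g) <= M t.
Hypothesis Heps : 0 < eps.

Lemma orig_to_miqp {a g} :
  orig a g ->
  miqp (beta_of a) (delta_of a) g (fun t => ind_pos (dot (f t) g))
       (fun j t => ind_pos (dot (f t) g) * delta_of a j).
Proof.
move=> [HA [HG Htau]].
have Hbin t : ind_pos (dot (f t) g) = 0 \/ ind_pos (dot (f t) g) = 1.
  by rewrite /ind_pos; case: Rlt_dec; [right | left].
have Hlin j t := product_linearization_feasible (Hbin t) (HAbd _ HA j).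
split; first by rewrite stack_of.
split=> //; split=> //.
split; first by move=> j; exact: HAbd.
split; first by move=> t; exact: indicator_bigM (HMub t _ HG).
split; first by move=> j t; case: (Hlin j t).
by split=> // j t; case: (Hlin j t).
Qed.

End Reformulation.

Theorem theorem1
  (T dx df : nat) (HT : (0 < T)%nat)
  (y : 'I_T -> R) (x : 'I_T -> 'I_dx -> R) (f : 'I_T -> 'I_df -> R)
  (A : ('I_(dx + dx) -> R) -> Prop) (G : ('I_df -> R) -> Prop)
  (HA : compact_set A) (HG : compact_set G)
  (L U : 'I_dx -> R) (HLU : forall j, L j <= U j)
  (HAbd : forall a, A a -> forall j, L j <= delta_of a j <= U j)
  (M : 'I_T -> R)
  (HMub : forall t g, G g -> Rabs (dot (f t) g) <= M t)
  (HMatt : forall t, exists g, G g /\ Rabs (dot (f t) g) = M t)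
  (eps tau1 tau2 : R) (Heps : 0 < eps)
  (Htau : 0 < tau1 /\ tau1 < tau2 /\ tau2 < 1)
  (ah : 'I_(dx + dx) -> R) (gh : 'I_df -> R)
  (Hhat : orig_feasible f A G tau1 tau2 ah gh /\
          forall a g, orig_feasible f A G tau1 tau2 a g ->
            ST y x f ah gh <= ST y x f a g)
  (bb db : 'I_dx -> R) (gb : 'I_df -> R) (dbar : 'I_T -> R)
  (lb : 'I_dx -> 'I_T -> R)
  (Hbar : miqp_feasible f A G L U M eps tau1 tau2 bb db gb dbar lb /\
          forall b dl g d l, miqp_feasible f A G L U M eps tau1 tau2 b dl g d l ->
            QT y x bb lb <= QT y x b l) :
  ST y x f ah gh = ST y x f (stack bb db) gb /\
  ST y x f (stack bb db) gb = QT y x bb lb.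
Proof.
case: Hhat => [Hah ah_min]; case: Hbar => [Hbar bar_min].
have Qbar := miqp_objective y x Hbar.
have hat_le_bar := ah_min _ _ (miqp_to_orig Hbar).
have Hlift := orig_to_miqp HAbd HMub Heps Hah.
have Qhat := miqp_objective y x Hlift.
have bar_le_hat := bar_min _ _ _ _ _ Hlift.
rewrite Qhat stack_of in bar_le_hat.
split; lra.
Qed.
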